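(* The finite set $\widetilde{\mathcal{S}}$ admits a unique ordered partition $$\widetilde{\mathcal{S}}=\bigcup_{i=0}^{\ell'+1}\widetilde{\mathcal{S}}_i$$ into pairwise disjoint, possibly empty, subsets such that (i) for $0\le i_0<i\le\ell'+1$, elements $y_0\in\mathcal{S}^{\mathbf G}_{i_0}$ and $x\in\widetilde{\mathcal{S}}_i$ are either incomparable or satisfy $x\succ y_0$; (ii) for every $x_0\in\widetilde{\mathcal{S}}_{i_0}$ and every integer $i$ with $i_0\le i\le\ell'$, there exists $y\in\mathcal{S}^{\mathbf G}_i$ with $y\succ x_0$. Moreover, this partition satisfies (iii) for $0\le i_0<i\le\ell'+1$, elements $x_0\in\widetilde{\mathcal{S}}_{i_0}$ and $x\in\widetilde{\mathcal{S}}_i$ are either incomparable or satisfy $x\succ x_0$.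
   Context: Let $F$ be a number field with adèles $\mathbb{A}$, $D$ a central division algebra over $F$ of degree $d>1$, $G'_m$ the group of invertible elements of $M_m(D)$, $G_m=GL_m$ over $F$; parabolics are standard (block-upper-triangular), attached to ordered partitions; $\nu$ is the absolute value of reduced norm (resp. determinant). For the parabolic attached to $(n_1,\dots,n_r)$, third entries are $\underline z\in\mathbb{R}^r$ with $\sum n_jz_j=0$, $z_1\ge\dots\ge z_r$, $\nu_{\underline z}=\prod\nu(\ell_j)^{z_j}$; $\iota'$ (for $G'_n$) and $\iota$ (for $G_{nd}$) send $\underline z$ to $(z_1,\dots,z_1,\dots,z_r,\dots,z_r)$ with $z_j$ repeated $n_j$ times. Partial order on $\mathbb{R}^N$: $\underline s\succ\underline t$ iff $\underline s\ne\underline t$ and $\sum_{j\le i}s_j\le\sum_{j\le i}t_j$ for $i=1,\dots,N-1$; comparable means one is $\succ$ the other. Fix a cuspidal automorphic representation $\pi'$ of the Levi factor of a parabolic $P'$ of $G'_n$ and let $\sigma$ be the cuspidal representation of the Levi factor of a parabolic $Q$ of $G_{nd}$ given by the cuspidal support of its factorwise global Jacquet–Langlands transfer $\mathbf G(\pi')$ (Badulescu). $\mathcal{M}'$ (resp. $\mathcal{M}$) is the set of triples $(R',\Pi',\underline z')$ with $R'$ a parabolic of $G'_n$ containing an element associate to $P'$, $\Pi'$ a unitary discrete spectrum representation of its Levi factor, $\underline z'$ in the closed positive chamber, such that the cuspidal support of $\Pi'\otimes\nu_{\underline z'}$ is associate to $\pi'$ (resp. the same for $G_{nd}$, $Q$,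 $\sigma$). The map $\mathbf G:\mathcal{M}'\to\mathcal{M}$ sends $(R',\Pi'_1\otimes\cdots\otimes\Pi'_r,\underline z')$, $R'$ attached to $(n_1,\dots,n_r)$, to $(R,\mathbf G(\Pi'_1)\otimes\cdots\otimes\mathbf G(\Pi'_r),\underline z')$, $R$ attached to $(n_1d,\dots,n_rd)$. Let $\mathcal{S}'=\{\iota'(\underline z'):(R',\Pi',\underline z')\in\mathcal{M}'\}$ and $\mathcal{S}=\{\iota(\underline z):(R,\Pi,\underline z)\in\mathcal{M}\}$ (finite sets). Partition $\mathcal{S}'$: let $\mathcal{S}^{\rm aux}_0$ be the set of $\succ$-maximal elements of $\mathcal{S}'$ and inductively $\mathcal{S}^{\rm aux}_i$ the maximal elements of $\mathcal{S}'\setminus\bigcup_{j<i}\mathcal{S}^{\rm aux}_j$, until exhausted after $\ell'+1$ steps; $\mathcal{S}'_i=\mathcal{S}^{\rm aux}_{\ell'-i}$. Define $\mathcal{S}^{\mathbf G}_i=\{\iota(\mathbf G(\underline z')):\iota'(\underline z')\in\mathcal{S}'_i\}$ for $0\le i\le\ell'$, where $\iota(\mathbf G(\underline z'))$ is obtained from $\iota'(\underline z')$ by repeating each coordinate $d$ times, $\mathcal{S}^{\mathbf G}=\bigcup_i\mathcal{S}^{\mathbf G}_i$, and $\widetilde{\mathcal{S}}=\mathcal{S}\setminus\mathcal{S}^{\mathbf G}$. *)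

From HB Require Import structures.
From mathcomp Require Import all_boot all_order all_algebra.
Set Implicit Arguments.
Unset Strict Implicit.
Unset Printing Implicit Defensive.
Import Order.TTheory GRing.Theory Num.Theory.
Local Open Scope ring_scope.

Section Defs.
Variable R : realFieldType.

Definition psum N (s : 'rV[R]_N) (k : nat) : R :=
  \sum_(j < N | (j < k)%N) s 0 j.

Definition succ N (s t : 'rV[R]_N) : bool :=
  (s != t) && [forall i : 'I_N, (i.+1 < N)%N ==> (psum s i.+1 <= psum t i.+1)].

Definition comparable N (s t : 'rV[R]_N) : bool := succ s t || succ t s.

(* vectors of the form iota(z): nonincreasing coordinates, total sum 0 *)
Definition chamber_vec N (s : 'rV[R]_N) : Prop :=
  (forall i j : 'I_N, (i <= j)%N -> s 0 j <= s 0 i) /\ \sum_(j < N) s 0 j = 0.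

Definition maxel N (X : seq 'rV[R]_N) : seq 'rV[R]_N :=
  [seq x <- X | ~~ has (fun y => succ y x) X].

(* remainder after removing k layers of maximal elements:
   rem_k = S' \ (S^aux_0 ∪ ... ∪ S^aux_{k-1}) *)
Definition remk N (S' : seq 'rV[R]_N) (k : nat) : seq 'rV[R]_N :=
  iter k (fun X => [seq x <- X | x \notin maxel X]) S'.

Definition Saux N (S' : seq 'rV[R]_N) (k : nat) := maxel (remk S' k).

(* S'_i = S^aux_{l'-i} *)
Definition Slev N (S' : seq 'rV[R]_N) (l i : nat) := Saux S' (l - i).

(* iota(G(z')) : repeat each coordinate d times *)
Definition Gmap n d (s : 'rV[R]_n) : 'rV[R]_(n * d) :=
  mxvec (\matrix_(i < n, j < d) s 0 i).

Definition SG n d (S' : seq 'rV[R]_n) (l i : nat) : seq 'rV[R]_(n * d) :=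
  map (@Gmap n d) (Slev S' l i).

Definition inSG n d (S' : seq 'rV[R]_n) (l : nat) (x : 'rV[R]_(n * d)) : bool :=
  has (fun i => x \in @SG n d S' l i) (iota 0 l.+1).

Definition Stilde n d (S' : seq 'rV[R]_n) (S : seq 'rV[R]_(n * d)) (l : nat) :=
  [seq x <- S | ~~ @inSG n d S' l x].

Definition is_partition n d (S' : seq 'rV[R]_n) (S : seq 'rV[R]_(n * d)) (l : nat)
  (P : nat -> 'rV[R]_(n * d) -> bool) : Prop :=
  [/\ (forall i x, (i <= l.+1)%N -> P i x -> x \in Stilde S' S l),
      (forall x, x \in Stilde S' S l -> exists2 i, (i <= l.+1)%N & P i x) &
      (forall i j x, (i <= l.+1)%N -> (j <= l.+1)%N -> P i x -> P j x -> i = j)].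

Definition cond_i n d (S' : seq 'rV[R]_n) (l : nat)
  (P : nat -> 'rV[R]_(n * d) -> bool) : Prop :=
  forall i0 i y0 x, (i0 < i)%N -> (i <= l.+1)%N ->
    y0 \in @SG n d S' l i0 -> P i x -> ~~ comparable x y0 || succ x y0.

Definition cond_ii n d (S' : seq 'rV[R]_n) (l : nat)
  (P : nat -> 'rV[R]_(n * d) -> bool) : Prop :=
  forall i0 x0 i, (i0 <= l.+1)%N -> P i0 x0 -> (i0 <= i)%N -> (i <= l)%N ->
    exists2 y, y \in @SG n d S' l i & succ y x0.

Definition cond_iii n d (l : nat) (P : nat -> 'rV[R]_(n * d) -> bool) : Prop :=
  forall i0 i x0 x, (i0 < i)%N -> (i <= l.+1)%N ->
    P i0 x0 -> P i x -> ~~ comparable x x0 || succ x x0.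

End Defs.

(* On zero-sum vectors the relation s ≻ t is a strict partial order, because a
   vector is determined by its partial sums; and repeating every coordinate d
   times preserves it, since the partial sums of the stretched vector
   interpolate linearly those of the original one.  An element of S'_i with
   i < ℓ' belongs to the remainder from which S'_{i+1} was extracted as the
   layer of maximal elements without being maximal there, so it lies below
   some element of S'_{i+1}; hence every element of S^G_i lies below one of
   S^G_{i+1}.  Put x ∈ S~ into the part indexed by the least i such that some
   element of S^G_i lies above x (ℓ'+1 if there is none).  By the previous
   remark x then lies below some element of every later S^G_j, which is (ii),
   and asymmetry of ≻ gives (i), (iii) and uniqueness.  The argument works for
   any l. *)

From Pilot Require Import Defs.
From HB Require Import structures.
From mathcomp Require Import all_boot all_order all_algebra.
From mathcomp Require Import ring.
Import Order.TTheory GRing.Theory Num.Theory.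
Local Open Scope ring_scope.

Set Implicit Arguments.
Unset Strict Implicit.
Unset Printing Implicit Defensive.

Section Dominance.
Variables (R : realFieldType) (N : nat).
Implicit Types (s t u : 'rV[R]_N) (k : nat).

Definition zero_sum s : Prop := \sum_(j < N) s 0 j = 0.

Definition psum_le s t : Prop :=
  forall i : 'I_N, (i.+1 < N)%N -> psum s i.+1 <= psum t i.+1.

Lemma psum0 s : psum s 0 = 0.
Proof. by rewrite /psum big_pred0. Qed.

Lemma psumS s (j : 'I_N) : psum s j.+1 = psum s j + s 0 j.
Proof.
rewrite /psum (bigD1 j) //= addrC; congr (_ + _); apply: eq_bigl => i.
by rewrite ltnS -val_eqE /= ltn_neqAle andbC.
Qed.

Lemma psum_full s k : (N <= k)%N -> psum s k = \sum_(j < N) s 0 j.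
Proof. by move=> leNk; apply: eq_bigl => i; rewrite (leq_trans (ltn_ord i)). Qed.

Lemma eq_row_psum s t : psum s =1 psum t -> s = t.
Proof.
by move=> eq_st; apply/rowP => j; apply: (@addrI _ (psum s j));
  rewrite -psumS eq_st (eq_st j) -psumS.
Qed.

Lemma psum_le_all s t : zero_sum s -> zero_sum t ->
  psum_le s t -> forall k, psum s k <= psum t k.
Proof.
move=> zs zt le_st [|k]; first by rewrite !psum0.
have [ltkN|leNk] := ltnP k.+1 N; first exact: (le_st (Ordinal (ltnW ltkN))).
by rewrite !psum_full // zs zt.
Qed.

Lemma psum_le_anti s t : zero_sum s -> zero_sum t ->
  psum_le s t -> psum_le t s -> s = t.
Proof.
move=> zs zt le_st le_ts; apply: eq_row_psum => k.
by apply/eqP; rewrite eq_le !psum_le_all.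
Qed.

Lemma succP s t : reflect (s != t /\ psum_le s t) (succ s t).
Proof.
apply: (iffP andP) => [[ne_st /forallP le_st]|[ne_st le_st]]; split => //.
  by move=> i; apply/implyP.
by apply/forallP => i; apply/implyP/le_st.
Qed.

Lemma succ_irr s : succ s s = false.
Proof. by rewrite /succ eqxx. Qed.

Lemma succ_asym s t : zero_sum s -> zero_sum t ->
  succ s t -> ~~ succ t s.
Proof.
move=> zs zt /succP[ne_st le_st]; apply/negP => /succP[_ le_ts].
by move/eqP: ne_st; apply; apply: psum_le_anti.
Qed.

Lemma succ_trans s t u : zero_sum s -> zero_sum t -> zero_sum u ->
  succ s t -> succ t u -> succ s u.
Proof.
move=> zs zt zu s_st s_tu; have /succP[_ le_st] := s_st; have /succP[_ le_tu] := s_tu.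
apply/succP; split; last by move=> i lti; apply: le_trans (le_st i lti) (le_tu i lti).
by apply: contraTneq s_tu => <-; apply: succ_asym.
Qed.

End Dominance.

Lemma index_allpairs (T1 T2 : eqType) (s1 : seq T1) (s2 : seq T2) a b :
  a \in s1 -> b \in s2 ->
  index (a, b) [seq (x1, x2) | x1 <- s1, x2 <- s2] = (index a s1 * size s2 + index b s2)%N.
Proof.
elim: s1 => //= x s1 IHs1; rewrite inE => s1a s2b; rewrite index_cat.
have [->|ne_ax] := eqVneq a x.
  by rewrite map_f // mul0n add0n index_map // => y1 y2 [].
have -> : (a, b) \in [seq (x, y) | y <- s2] = false.
  by apply/mapP => -[y _ [eq_ax _]]; move/eqP: ne_ax.
by rewrite /= size_map IHs1 ?mulSn ?addnA //; case/predU1P: s1a ne_ax => // ->; rewrite eqxx.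
Qed.

Lemma enum_rank_val (T : finType) (x : T) : val (enum_rank x) = index x (enum T).
Proof.
by rewrite -{2}(nth_enum_rank x x) index_uniq // ?enum_uniq // -cardE ltn_ord.
Qed.

Lemma mxvec_index_val m k (i : 'I_m) (j : 'I_k) :
  val (mxvec_index i j) = (i * k + j)%N.
Proof.
rewrite /mxvec_index /= enum_rank_val enumT unlock /=.
by rewrite index_allpairs ?mem_enum // index_enum_ord size_enum_ord index_enum_ord.
Qed.

Section RepeatCoordinates.
Variables (R : realFieldType) (n d : nat).
Implicit Types s t : 'rV[R]_n.

Lemma psum_Gmap_step s (i : 'I_n) (j : 'I_d) :
  psum (Gmap d s) (i * d + j).+1 = psum (Gmap d s) (i * d + j) + s 0 i.
Proof. by rewrite -mxvec_index_val psumS /Gmap mxvecE mxE. Qed.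

Lemma psum_Gmap_block s (i : 'I_n) r : (r <= d)%N ->
  psum (Gmap d s) (i * d + r) = psum (Gmap d s) (i * d) + r%:R * s 0 i.
Proof.
elim: r => [|r IHr] ltrd; first by rewrite addn0 mul0r addr0.
rewrite addnS (psum_Gmap_step s i (Ordinal ltrd)) IHr 1?ltnW // -addrA.
by rewrite -[r.+1]addn1 natrD mulrDl mul1r.
Qed.

Lemma psum_Gmap_mul s q : (q <= n)%N -> psum (Gmap d s) (q * d) = d%:R * psum s q.
Proof.
elim: q => [|q IHq] ltqn; first by rewrite mul0n !psum0 mulr0.
rewrite mulSnr (psum_Gmap_block s (Ordinal ltqn)) // IHq 1?ltnW //.
by rewrite (psumS s (Ordinal ltqn)) mulrDr [_ * s 0 _]mulrC.
Qed.

Lemma psum_Gmap s (i : 'I_n) r : (r <= d)%N ->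
  psum (Gmap d s) (i * d + r) = (d - r)%:R * psum s i + r%:R * psum s i.+1.
Proof.
move=> lerd; rewrite psum_Gmap_block // psum_Gmap_mul 1?ltnW // psumS natrB //.
ring.
Qed.

Lemma Gmap_zero_sum s : zero_sum s -> zero_sum (Gmap d s).
Proof.
move=> zs; rewrite /zero_sum -(@psum_full _ _ _ (n * d)) //.
by rewrite psum_Gmap_mul // psum_full // zs mulr0.
Qed.

Hypothesis d_gt0 : (0 < d)%N.

Lemma Gmap_inj : injective (@Gmap R n d).
Proof.
move=> s t /rowP eq_st; apply/rowP => j.
by have := eq_st (mxvec_index j (Ordinal d_gt0)); rewrite /Gmap !mxvecE !mxE.
Qed.

Lemma Gmap_psum_le s t : zero_sum s -> zero_sum t ->
  psum_le s t -> psum_le (Gmap d s) (Gmap d t).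
Proof.
move=> zs zt le_st i ltind.
have ltqn : (i.+1 %/ d < n)%N by rewrite ltn_divLR.
have lerd : (i.+1 %% d <= d)%N by rewrite ltnW // ltn_pmod.
rewrite (divn_eq i.+1 d) (psum_Gmap s (Ordinal ltqn)) // (psum_Gmap t (Ordinal ltqn)) //.
by rewrite lerD // ler_wpM2l // psum_le_all.
Qed.

Lemma Gmap_succ s t : zero_sum s -> zero_sum t -> succ s t -> succ (Gmap d s) (Gmap d t).
Proof.
move=> zs zt /succP[ne_st le_st]; apply/succP; split; last exact: Gmap_psum_le.
by rewrite (inj_eq Gmap_inj).
Qed.

End RepeatCoordinates.

Lemma count_lt_in (T : eqType) (a1 a2 : pred T) (s : seq T) :
  {in s, subpred a1 a2} -> has (predI a2 (predC a1)) s -> (count a1 s < count a2 s)%N.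
Proof.
move=> sub12; rewrite has_count => pos.
have disj : count (predI a1 (predI a2 (predC a1))) s = 0.
  by rewrite (eq_count (a2 := pred0)) ?count_pred0 // => x /=; case: (a1 x); rewrite ?andbF.
have union : count (predU a1 (predI a2 (predC a1))) s = count a2 s.
  by apply: eq_in_count => x /sub12 /=; case: (a1 x) => [->|_] //=; rewrite andbT.
have := count_predUI a1 (predI a2 (predC a1)) s.
by rewrite disj union addn0 => ->; rewrite -[X in (X < _)%N]addn0 ltn_add2l.
Qed.

Section MaximalLayers.
Variables (R : realFieldType) (N : nat).
Implicit Types (X : seq 'rV[R]_N) (a : 'rV[R]_N).

Lemma maxel_dominates X a : {in X, forall x, zero_sum x} -> zero_sum a ->
  has (fun y => succ y a) X -> exists2 m, m \in maxel X & succ m a.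
Proof.
move=> zX za; have [c ltac] := ubnP (count (fun y => succ y a) X).
elim: c a za ltac => // c IHc a za ltac /hasP[z Xz s_za].
have zz := zX z Xz.
have [maxz|] := boolP (z \in maxel X); first by exists z.
rewrite mem_filter Xz andbT negbK => /IHc[||m maxm s_mz] //.
  rewrite -ltnS; apply: leq_trans ltac; apply: count_lt_in.
    by move=> x Xx s_xz; apply: succ_trans (zX x Xx) zz za s_xz s_za.
  by apply/hasP; exists z; rewrite //= s_za succ_irr.
exists m => //; have zm : zero_sum m by apply: zX; move: maxm; rewrite mem_filter => /andP[].
exact: succ_trans zm zz za s_mz s_za.
Qed.

Lemma mem_remk (S' : seq 'rV[R]_N) k x : x \in remk S' k -> x \in S'.
Proof. by elim: k => // k IHk; rewrite [remk _ _]/= mem_filter => /andP[_ /IHk]. Qed.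

Lemma mem_Saux (S' : seq 'rV[R]_N) k x : x \in Saux S' k -> x \in S'.
Proof. by rewrite mem_filter => /andP[_ /mem_remk]. Qed.

Lemma remkS_dominated (S' : seq 'rV[R]_N) k a : {in S', forall x, zero_sum x} ->
  a \in remk S' k.+1 -> exists2 m, m \in Saux S' k & succ m a.
Proof.
move=> zS'; rewrite [remk _ _]/= mem_filter mem_filter => /andP[/negP not_max remka].
have zrem : {in remk S' k, forall x, zero_sum x} by move=> x /mem_remk /zS'.
apply: maxel_dominates => //; first exact: zrem.
by apply/negPn/negP => not_dom; apply: not_max; rewrite not_dom.
Qed.

End MaximalLayers.

Section Levels.
Variables (R : realFieldType) (n d : nat).
Variables (S' : seq 'rV[R]_n) (S : seq 'rV[R]_(n * d)) (l : nat).
Hypothesis d_gt0 : (0 < d)%N.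
Hypothesis zS' : {in S', forall s, zero_sum s}.
Hypothesis zS : {in S, forall s, zero_sum s}.

Lemma SG_zero_sum i y : y \in SG d S' l i -> zero_sum y.
Proof. by case/mapP=> a /mem_Saux /zS' za ->; apply: Gmap_zero_sum. Qed.

Lemma Stilde_zero_sum x : x \in Stilde S' S l -> zero_sum x.
Proof. by rewrite mem_filter => /andP[_ /zS]. Qed.

Lemma SG_dominated_next i y : (i < l)%N -> y \in SG d S' l i ->
  exists2 y', y' \in SG d S' l i.+1 & succ y' y.
Proof.
move=> ltil /mapP[a]; rewrite /Slev /Saux -subnSK // mem_filter => /andP[_ rema] ->.
have [m Saux_m s_ma] := remkS_dominated zS' rema.
exists (Gmap d m); first exact: map_f.
by apply: Gmap_succ => //; apply: zS'; [exact: mem_Saux Saux_m | exact: mem_remk rema].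
Qed.

Definition dominated_at x i := has (fun y => succ y x) (SG d S' l i).

Lemma dominated_at_up x i j : zero_sum x -> (i <= j <= l)%N ->
  dominated_at x i -> dominated_at x j.
Proof.
move=> zx /andP[]; elim: j => [|j IHj]; first by rewrite leqn0 => /eqP->.
rewrite leq_eqVlt ltnS => /predU1P[-> //|leij] ltjl /(IHj leij (ltnW ltjl)) /hasP[y SGy s_yx].
have [y' SGy' s_y'y] := SG_dominated_next ltjl SGy.
apply/hasP; exists y' => //.
exact: succ_trans (SG_zero_sum SGy') (SG_zero_sum SGy) zx s_y'y s_yx.
Qed.

Definition level x := find (dominated_at x) (iota 0 l.+1).

Lemma level_le x : (level x <= l.+1)%N.
Proof. by rewrite -[l.+1](size_iota 0) find_size. Qed.

Lemma dominated_at_level x : (level x <= l)%N -> dominated_at x (level x).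
Proof.
move=> lelx; have : has (dominated_at x) (iota 0 l.+1) by rewrite has_find size_iota.
by move/(nth_find 0); rewrite nth_iota.
Qed.

Lemma before_level x i : (i < level x)%N -> ~~ dominated_at x i.
Proof.
move=> ltilx; have := before_find 0 ltilx.
by rewrite nth_iota ?add0n // => [->|]; last exact: leq_trans ltilx (level_le x).
Qed.

Lemma level_min x i : dominated_at x i -> (level x <= i)%N.
Proof. by move=> dom_xi; rewrite leqNgt; apply: contraL dom_xi; apply: before_level. Qed.

Definition level_part i x := (x \in Stilde S' S l) && (i == level x).

Lemma level_part_partition : is_partition S' S l level_part.
Proof.
split=> [i x _ /andP[] // | x Sx | i j x _ _ /andP[_ /eqP->] /andP[_ /eqP->] //].
by exists (level x); rewrite ?level_le // /level_part Sx eqxx.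
Qed.

Lemma level_part_cond_i : cond_i S' l level_part.
Proof.
move=> i0 i y0 x lti0i _ SGy0 /andP[_ /eqP eq_ilx]; subst i.
have not_s_y0x : ~~ succ y0 x.
  by apply: contra (before_level lti0i) => s_y0x; apply/hasP; exists y0.
by rewrite /Defs.comparable (negbTE not_s_y0x) orbF; case: (succ x y0).
Qed.

Lemma level_part_cond_ii : cond_ii S' l level_part.
Proof.
move=> i0 x0 i _ /andP[Sx0 /eqP->] lei ltil.
have /hasP[y SGy s_yx0] : dominated_at x0 i.
  apply: dominated_at_up (dominated_at_level (leq_trans lei ltil)).
    exact: Stilde_zero_sum.
  by rewrite lei ltil.
by exists y.
Qed.

Lemma level_part_cond_iii : cond_iii l level_part.
Proof.
move=> i0 i x0 x lti0i lei /andP[Sx0 /eqP eq_i0] /andP[Sx /eqP eq_i]; subst i0 i.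
rewrite /Defs.comparable; case: (boolP (succ x x0)) => //= not_s_xx0; rewrite orbF.
apply/negP => s_x0x; have /hasP[y SGy s_yx0] := dominated_at_level (leq_trans lti0i lei).
have : dominated_at x (level x0).
  apply/hasP; exists y => //.
  exact: succ_trans (SG_zero_sum SGy) (Stilde_zero_sum Sx0) (Stilde_zero_sum Sx) s_yx0 s_x0x.
by move/level_min; rewrite leqNgt lti0i.
Qed.

Lemma cond_level (Q : nat -> 'rV[R]_(n * d) -> bool) :
  is_partition S' S l Q -> cond_i S' l Q -> cond_ii S' l Q ->
  forall i x, (i <= l.+1)%N -> Q i x -> i = level x.
Proof.
move=> [QS _ _] Qi Qii i x lei Qix; have zx := Stilde_zero_sum (QS i x lei Qix).
apply/eqP; rewrite eqn_leq; apply/andP; split.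
  rewrite leqNgt; apply/negP => ltlxi.
  have /hasP[y0 SGy0 s_y0x] := dominated_at_level (leq_trans ltlxi lei).
  have := Qi _ _ y0 x ltlxi lei SGy0 Qix.
  rewrite /Defs.comparable s_y0x orbT /= => s_xy0.
  by move: s_y0x; apply/negP; apply: succ_asym zx (SG_zero_sum SGy0) s_xy0.
have [leil|] := leqP i l; last by move=> ltli; apply: leq_trans (level_le x) ltli.
have [y SGy s_yx] := Qii i x i lei Qix (leqnn i) leil.
by apply: level_min; apply/hasP; exists y.
Qed.

Lemma level_part_unique (Q : nat -> 'rV[R]_(n * d) -> bool) :
  is_partition S' S l Q -> cond_i S' l Q -> cond_ii S' l Q ->
  forall i x, (i <= l.+1)%N -> Q i x = level_part i x.
Proof.
move=> Qpart Qi Qii i x lei; have [QS QS' _] := Qpart.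
apply/idP/idP => [Qix|/andP[Sx /eqP->]].
  by rewrite /level_part (QS i x lei Qix) /= (cond_level Qpart Qi Qii lei Qix).
by have [j lej Qjx] := QS' x Sx; rewrite -(cond_level Qpart Qi Qii lej Qjx).
Qed.

End Levels.

Unset Implicit Arguments.

Theorem proposition4p7 (R : realFieldType) (n d : nat) (hd : (1 < d)%N)
  (S' : seq 'rV[R]_n) (S : seq 'rV[R]_(n * d))
  (hS' : forall s, s \in S' -> chamber_vec s)
  (hS : forall s, s \in S -> chamber_vec s)
  (l : nat) (hl : remk S' l.+1 = [::]) (hl' : remk S' l != [::]) :
  exists P : nat -> 'rV[R]_(n * d) -> bool,
    [/\ is_partition S' S l P, cond_i S' l P, cond_ii S' l P,
        (forall Q : nat -> 'rV[R]_(n * d) -> bool,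
           is_partition S' S l Q -> cond_i S' l Q -> cond_ii S' l Q ->
           forall i x, (i <= l.+1)%N -> Q i x = P i x)
      & cond_iii l P].
Proof.
have d_gt0 : (0 < d)%N := ltnW hd.
have zS' : {in S', forall s, zero_sum s} by move=> s /hS'[].
have zS : {in S, forall s, zero_sum s} by move=> s /hS[].
exists (level_part S' S l); split.
- exact: level_part_partition.
- exact: level_part_cond_i.
- exact: level_part_cond_ii.
- exact: level_part_unique.
- exact: level_part_cond_iii.
Qed.
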